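(* Let $\mu\ge0$ and define on $[0,\infty)$ $$\phi(x)=\pi e^{\mu x}Ai(\mu^2+x),\qquad \psi(x)=Ce^{\mu x}Ai(\mu^2+x)+e^{\mu x}Bi(\mu^2+x),$$ with $C=-\frac{\mu Bi(\mu^2)+Bi'(\mu^2)}{\mu Ai(\mu^2)+Ai'(\mu^2)}$. Then $\phi$ is strictly decreasing and $\psi$ is strictly increasing on $[0,\infty)$.
   Context: $Ai,Bi$ are the standard Airy functions, linearly independent solutions of $u''=xu$; on $[0,\infty)$, $Ai$ is positive and decreasing with $Ai(x)\to0$, and $Bi$ is positive and increasing with $Bi(x)\to\infty$ as $x\to\infty$. *)

From Stdlib Require Import Reals.
From Coquelicot Require Import Coquelicot.
Open Scope R_scope.

Definition Gamma (s : R) : R :=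
  RInt_gen (fun t => Rpower t (s - 1) * exp (- t)) (at_right 0) (Rbar_locally p_infty).

(* Taylor coefficients of the two basic solutions f, g of u'' = x u
   with f(0)=1, f'(0)=0 and g(0)=0, g'(0)=1: a_(n+3) = a_n / ((n+3)(n+2)). *)
Fixpoint airy_f_coef (n : nat) : R :=
  match n with
  | O => 1
  | S O => 0
  | S (S O) => 0
  | S (S (S m) as k) => airy_f_coef m / (INR (S k) * INR k)
  end.

Fixpoint airy_g_coef (n : nat) : R :=
  match n with
  | O => 0
  | S O => 1
  | S (S O) => 0
  | S (S (S m) as k) => airy_g_coef m / (INR (S k) * INR k)
  end.

Definition airy_f (x : R) : R := PSeries airy_f_coef x.
Definition airy_g (x : R) : R := PSeries airy_g_coef x.

(* Ai(0) = 1/(3^(2/3) Gamma(2/3)),  -Ai'(0) = 1/(3^(1/3) Gamma(1/3)) *)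
Definition airy_c1 : R := / (Rpower 3 (2/3) * Gamma (2/3)).
Definition airy_c2 : R := / (Rpower 3 (1/3) * Gamma (1/3)).

(* Standard Airy functions (Abramowitz–Stegun 10.4.2–10.4.3). *)
Definition Ai (x : R) : R := airy_c1 * airy_f x - airy_c2 * airy_g x.
Definition Bi (x : R) : R := sqrt 3 * (airy_c1 * airy_f x + airy_c2 * airy_g x).

(* For a solution [y] of [y'' = x y], the map [x |-> exp (mu x) y (mu^2 + x)] has derivative
   [exp (mu x) (mu y + y') (mu^2 + x)], and
   [(exp (- mu t) (mu y + y'))' = exp (- mu t) (t - mu^2) y],
   so wherever [y > 0] the weighted quantity increases past [t = mu^2].
   For [y = C Ai + Bi] it vanishes at [mu^2] by the choice of [C], so [psi] increases.
   For [y = Ai], positive, decreasing and tending to [0], a nonnegative value past [mu^2] would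
   keep [mu Ai + Ai'] above a positive constant, which is impossible; so [phi] decreases.

   The real input is that [Ai], given by its Taylor series with constants involving
   [Gamma (1/3)] and [Gamma (2/3)], is bounded on [[0, +oo)]; a bounded solution with [u 0 > 0]
   is positive and decreasing, since [u u'] is nondecreasing and once nonnegative forces [u^2]
   to grow.  Boundedness comes from the integral
   [int_0^oo exp (-s^3/3 - x s/2) sin (pi/3 - sqrt 3 x s/2) ds], a bounded solution of the same
   equation whose initial data, computed with the substitution [t = s^3/3] in the Gamma
   integrals, are proportional to those of [Ai]. *)

From Stdlib Require Import Reals Lra Psatz Arith Lia.
From Coquelicot Require Import Coquelicot.
Open Scope R_scope.

(* Coquelicot states derivatives and integrals in its own structures over [R];
   these tactics first make the goal an equation in [R]. *)
Ltac ring_R := match goal with |- @eq _ ?a ?b => change (@eq R a b); ring end.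
Ltac field_R := match goal with |- @eq _ ?a ?b => change (@eq R a b); field end.

Lemma is_derive_eq (f : R -> R) x l l' : is_derive f x l -> l = l' -> is_derive f x l'.
Proof. now intros H <-. Qed.

Lemma is_derive_Rplus (f g : R -> R) x df dg : is_derive f x df -> is_derive g x dg ->
  is_derive (fun t => f t + g t) x (df + dg).
Proof. intros Hf Hg. apply (is_derive_plus f g x df dg Hf Hg). Qed.

Lemma is_derive_Rminus (f g : R -> R) x df dg : is_derive f x df -> is_derive g x dg ->
  is_derive (fun t => f t - g t) x (df - dg).
Proof. intros Hf Hg. apply (is_derive_minus f g x df dg Hf Hg). Qed.

Lemma is_derive_Ropp (f : R -> R) x df : is_derive f x df ->
  is_derive (fun t => - f t) x (- df).
Proof. intros H. apply (is_derive_opp f x df H). Qed.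

Lemma is_derive_Rscal (f : R -> R) k x df : is_derive f x df ->
  is_derive (fun t => k * f t) x (k * df).
Proof. apply is_derive_scal. Qed.

Lemma is_derive_Rmult (f g : R -> R) x df dg : is_derive f x df -> is_derive g x dg ->
  is_derive (fun t => f t * g t) x (df * g x + f x * dg).
Proof. intros Hf Hg. apply (is_derive_mult f g x df dg Hf Hg). intros; apply Rmult_comm. Qed.

Lemma is_derive_Rsqr (f : R -> R) x df : is_derive f x df ->
  is_derive (fun t => f t ^ 2) x (2 * f x * df).
Proof. intros H. eapply is_derive_eq; [apply (is_derive_pow f 2 x df H)|]. simpl; ring. Qed.

Lemma is_derive_exp_comp (f : R -> R) x df : is_derive f x df ->
  is_derive (fun t => exp (f t)) x (df * exp (f x)).
Proof.
  intros H. eapply is_derive_eq; [apply (is_derive_comp exp f x (exp (f x)) df)|]; auto.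
  auto_derive; auto; ring.
Qed.

Lemma is_derive_shift (f : R -> R) c x df : is_derive f (c + x) df ->
  is_derive (fun t => f (c + t)) x df.
Proof.
  intros H. eapply is_derive_eq; [apply (is_derive_comp f (fun t => c + t)); [exact H|]|].
  - auto_derive; auto.
  - simpl. change (1 * df = df). ring.
Qed.

Lemma is_derive_lin (a x : R) : is_derive (fun t => a * t) x a.
Proof. auto_derive; auto; ring. Qed.

Lemma is_derive_MVT (f df : R -> R) a b : a < b ->
  (forall t, a <= t <= b -> is_derive f t (df t)) ->
  exists c, a < c < b /\ f b - f a = df c * (b - a).
Proof.
  intros Hab Hd.
  destruct (MVT_cor2 f df a b Hab) as [c [Hc Hc']].
  - intros c Hc. apply is_derive_Reals, Hd, Hc.
  - exists c; split; auto.
Qed.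

Lemma is_derive_nonneg_le (f df : R -> R) a b : a <= b ->
  (forall t, a <= t <= b -> is_derive f t (df t)) ->
  (forall t, a < t < b -> 0 <= df t) -> f a <= f b.
Proof.
  intros Hab Hd Hp. destruct (Req_dec a b) as [->|Hne]; [lra|].
  destruct (is_derive_MVT f df a b) as [c [Hc E]]; [lra|auto|].
  specialize (Hp c Hc). nra.
Qed.

Lemma is_derive_pos_lt (f df : R -> R) a b : a < b ->
  (forall t, a <= t <= b -> is_derive f t (df t)) ->
  (forall t, a < t < b -> 0 < df t) -> f a < f b.
Proof.
  intros Hab Hd Hp.
  destruct (is_derive_MVT f df a b) as [c [Hc E]]; auto.
  specialize (Hp c Hc). nra.
Qed.

Lemma is_derive_lower_slope (f df : R -> R) a b m : a <= b ->
  (forall t, a <= t <= b -> is_derive f t (df t)) ->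
  (forall t, a < t < b -> m <= df t) -> f a + m * (b - a) <= f b.
Proof.
  intros Hab Hd Hp.
  cut (f a - m * a <= f b - m * b); [lra|].
  apply (is_derive_nonneg_le (fun t => f t - m * t) (fun t => df t - m)); auto.
  - intros t Ht. apply is_derive_Rminus; [auto|apply is_derive_lin].
  - intros t Ht. specialize (Hp t Ht). lra.
Qed.

(* Gronwall's argument, through the monotonicity of [E t * exp (-k t)] and [E t * exp (k t)]. *)
Lemma gronwall_vanish_forward (E dE : R -> R) k a b : a <= b ->
  (forall t, a <= t <= b -> is_derive E t (dE t) /\ 0 <= E t /\ Rabs (dE t) <= k * E t) ->
  E a = 0 -> E b = 0.
Proof.
  intros Hab HE Ha.
  assert (H : - (E a * exp (- k * a)) <= - (E b * exp (- k * b))).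
  { apply (is_derive_nonneg_le (fun t => - (E t * exp (- k * t))) (fun t => - (dE t * exp (- k * t) + E t * (k * - exp (- k * t))))
      a b Hab).
    - intros t Ht. apply (is_derive_Ropp (fun t => E t * exp (- k * t))). eapply is_derive_eq.
      + apply (is_derive_Rmult E (fun t => exp (- k * t)));
          [apply HE, Ht|apply (is_derive_exp_comp (fun t => - k * t)), is_derive_lin].
      + ring_R.
    - intros t Ht. destruct (HE t ltac:(lra)) as [_ [HEt HdE]]. apply Rabs_le_between in HdE.
      assert (0 < exp (- k * t)) by apply exp_pos. nra. }
  destruct (HE b ltac:(lra)) as [_ [HEb _]]. assert (0 < exp (- k * b)) by apply exp_pos.
  rewrite Ha in H. nra.
Qed.

Lemma gronwall_vanish_backward (E dE : R -> R) k a b : a <= b ->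
  (forall t, a <= t <= b -> is_derive E t (dE t) /\ 0 <= E t /\ Rabs (dE t) <= k * E t) ->
  E b = 0 -> E a = 0.
Proof.
  intros Hab HE Hb.
  assert (H : E a * exp (k * a) <= E b * exp (k * b)).
  { apply (is_derive_nonneg_le (fun t => E t * exp (k * t)) (fun t => dE t * exp (k * t) + E t * (k * exp (k * t))) a b Hab).
    - intros t Ht. apply (is_derive_Rmult E (fun t => exp (k * t)));
        [apply HE, Ht|apply (is_derive_exp_comp (fun t => k * t)), is_derive_lin].
    - intros t Ht. destruct (HE t ltac:(lra)) as [_ [HEt HdE]]. apply Rabs_le_between in HdE.
      assert (0 < exp (k * t)) by apply exp_pos. nra. }
  destruct (HE a ltac:(lra)) as [_ [HEa _]]. assert (0 < exp (k * a)) by apply exp_pos.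
  rewrite Hb in H. nra.
Qed.

(** * The Airy equation on [[0, +oo)] *)

Definition airy_solution (u u' : R -> R) : Prop :=
  forall x, 0 <= x -> is_derive u x (u' x) /\ is_derive u' x (x * u x).

Lemma airy_solution_lincomb a b u u' v v' : airy_solution u u' -> airy_solution v v' ->
  airy_solution (fun t => a * u t + b * v t) (fun t => a * u' t + b * v' t).
Proof.
  intros Hu Hv x Hx. destruct (Hu x Hx) as [Hu1 Hu2], (Hv x Hx) as [Hv1 Hv2]. cbv beta. split.
  - apply (is_derive_Rplus (fun t => a * u t)); apply is_derive_Rscal; [exact Hu1|exact Hv1].
  - eapply is_derive_eq.
    + apply (is_derive_Rplus (fun t => a * u' t)); apply is_derive_Rscal; [exact Hu2|exact Hv2].
    + ring_R.
Qed.

Lemma airy_solution_opp u u' : airy_solution u u' -> airy_solution (fun t => - u t) (fun t => - u' t).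
Proof.
  intros Hu x Hx. destruct (Hu x Hx) as [Hu1 Hu2]. cbv beta. split; [apply is_derive_Ropp, Hu1|].
  eapply is_derive_eq; [apply is_derive_Ropp, Hu2|]. ring_R.
Qed.

(* The energy [u^2 + u'^2] has derivative [2 (1 + t) u u'], bounded by [(1 + t)] times itself. *)
Lemma airy_sol_unique u u' x0 : airy_solution u u' -> 0 <= x0 -> u x0 = 0 -> u' x0 = 0 ->
  forall x, 0 <= x -> u x = 0.
Proof.
  intros Hs Hx0 E0 E1 x Hx.
  set (E := fun t => u t ^ 2 + u' t ^ 2).
  set (k := 1 + Rmax x x0).
  assert (HE : forall t, 0 <= t <= Rmax x x0 ->
    is_derive E t (2 * (1 + t) * u t * u' t) /\ 0 <= E t /\ Rabs (2 * (1 + t) * u t * u' t) <= k * E t).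
  { intros t Ht. destruct (Hs t ltac:(lra)) as [D1 D2]. unfold E, k. split; [|split].
    - eapply is_derive_eq; [apply is_derive_Rplus; apply is_derive_Rsqr; eassumption|]. ring_R.
    - nra.
    - assert (0 <= (u t - u' t) ^ 2) by apply pow2_ge_0.
      assert (0 <= (u t + u' t) ^ 2) by apply pow2_ge_0.
      apply Rabs_le; split; nra. }
  assert (Hx1 := Rmax_l x x0). assert (Hx2 := Rmax_r x x0).
  assert (Ex : E x = 0).
  { destruct (Rle_lt_dec x0 x).
    - apply (gronwall_vanish_forward E (fun t => 2 * (1 + t) * u t * u' t) k x0 x); auto.
      + intros t Ht. apply HE; lra.
      + unfold E; rewrite E0, E1; ring.
    - apply (gronwall_vanish_backward E (fun t => 2 * (1 + t) * u t * u' t) k x x0); [lra| |].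
      + intros t Ht. apply HE; lra.
      + unfold E; rewrite E0, E1; ring. }
  unfold E in Ex. nra.
Qed.

Lemma airy_sol_prod_mono u u' a b : airy_solution u u' -> 0 <= a <= b ->
  u a * u' a <= u b * u' b.
Proof.
  intros Hs Hab. apply (is_derive_nonneg_le (fun t => u t * u' t) (fun t => u' t ^ 2 + t * u t ^ 2)); [lra| |].
  - intros t Ht. destruct (Hs t ltac:(lra)) as [D1 D2].
    eapply is_derive_eq; [apply (is_derive_Rmult u u'); eassumption|]. ring_R.
  - intros t Ht. nra.
Qed.

Lemma airy_sol_sq_mono u u' x0 a b : airy_solution u u' -> 0 <= x0 ->
  0 <= u x0 * u' x0 -> x0 <= a <= b -> u a ^ 2 <= u b ^ 2.
Proof.
  intros Hs Hx0 Hp Hab. apply (is_derive_nonneg_le (fun t => u t ^ 2) (fun t => 2 * (u t * u' t))); [lra| |].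
  - intros t Ht. destruct (Hs t ltac:(lra)) as [D1 _].
    eapply is_derive_eq; [apply is_derive_Rsqr; eassumption|]. ring_R.
  - intros t Ht. assert (u x0 * u' x0 <= u t * u' t) by (apply (airy_sol_prod_mono u u' _ _ Hs); lra).
    lra.
Qed.

(* Once [u u'] is nonnegative (and [u] nonzero), [u u'] grows linearly, hence [u^2] quadratically. *)
Lemma airy_sol_sq_unbounded u u' x0 M : airy_solution u u' -> 0 <= x0 ->
  0 <= u x0 * u' x0 -> u x0 <> 0 -> exists T, x0 <= T /\ M < u T ^ 2.
Proof.
  intros Hs Hx0 Hp NZ.
  set (c := u x0 ^ 2). assert (Hc : 0 < c) by (apply pow2_gt_0; auto).
  set (x1 := x0 + 1).
  assert (Hlin : forall t, x1 <= t -> c * (t - x1) <= u t * u' t).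
  { intros t Ht. cut (u x1 * u' x1 + c * (t - x1) <= u t * u' t).
    { assert (u x0 * u' x0 <= u x1 * u' x1) by (apply (airy_sol_prod_mono u u' _ _ Hs); unfold x1; lra).
      lra. }
    apply (is_derive_lower_slope (fun t => u t * u' t) (fun t => u' t ^ 2 + t * u t ^ 2)); auto.
    - intros s Hs'. destruct (Hs s ltac:(unfold x1 in *; lra)) as [D1 D2].
      eapply is_derive_eq; [apply (is_derive_Rmult u u'); eassumption|]. ring_R.
    - intros s Hs'. assert (c <= u s ^ 2) by (apply (airy_sol_sq_mono u u' x0 _ _ Hs); unfold x1 in *; auto; lra).
      unfold x1 in *. nra. }
  set (x2 := x1 + 1).
  set (T := x2 + (Rabs M + 1) / (2 * c)).
  assert (HT : x2 <= T) by (unfold T; assert (0 < (Rabs M + 1) / (2 * c)) by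
    (apply Rdiv_lt_0_compat; [assert (0 <= Rabs M) by apply Rabs_pos|]; lra); lra).
  exists T. split; [unfold x2, x1 in *; lra|].
  assert (Hq : u x2 ^ 2 + 2 * c * (T - x2) <= u T ^ 2).
  { apply (is_derive_lower_slope (fun t => u t ^ 2) (fun t => 2 * (u t * u' t))); auto.
    - intros s Hs'. destruct (Hs s ltac:(unfold x2, x1 in *; lra)) as [D1 _].
      eapply is_derive_eq; [apply is_derive_Rsqr; eassumption|]. ring_R.
    - intros s Hs'. assert (c * (s - x1) <= u s * u' s) by (apply Hlin; unfold x2 in *; lra).
      unfold x2 in *. nra. }
  assert (2 * c * (T - x2) = Rabs M + 1) by (unfold T; field; lra).
  assert (M <= Rabs M) by apply Rle_abs. nra.
Qed.

Lemma airy_sol_bounded_prod_neg u u' M : airy_solution u u' ->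
  (forall x, 0 <= x -> Rabs (u x) <= M) -> u 0 <> 0 ->
  forall x, 0 <= x -> u x * u' x < 0.
Proof.
  intros Hs HM H0 x0 Hx0. apply Rnot_le_lt; intro Hp.
  set (x1 := x0 + 1).
  assert (Hp1 : 0 <= u x1 * u' x1).
  { assert (u x0 * u' x0 <= u x1 * u' x1) by (apply (airy_sol_prod_mono u u' _ _ Hs); unfold x1; lra). lra. }
  destruct (Req_dec (u x1) 0) as [Z|NZ].
  - assert (Hz : forall t, x0 <= t <= x1 -> u t = 0).
    { intros t Ht. assert (u t ^ 2 <= u x1 ^ 2) by (apply (airy_sol_sq_mono u u' x0 _ _ Hs); auto; lra).
      rewrite Z in H. nra. }
    destruct (is_derive_MVT u u' x0 x1) as [c [Hc Ec]]; [unfold x1; lra| |].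
    { intros t Ht. apply Hs; lra. }
    rewrite !Hz in Ec by (unfold x1 in *; lra).
    apply H0, (airy_sol_unique u u' c Hs); [lra|apply Hz; lra|unfold x1 in Ec; lra|lra].
  - destruct (airy_sol_sq_unbounded u u' x1 (M ^ 2) Hs) as [T [HT HMT]]; [unfold x1; lra|auto|auto|].
    assert (HuT := HM T ltac:(unfold x1 in *; lra)).
    rewrite <- (pow2_abs (u T)) in HMT. assert (0 <= Rabs (u T)) by apply Rabs_pos. nra.
Qed.

Lemma continuity_pos_of_nonzero (u : R -> R) : continuity u -> 0 < u 0 ->
  (forall x, 0 <= x -> u x <> 0) -> forall x, 0 <= x -> 0 < u x.
Proof.
  intros Hc H0 Hnz x Hx. apply Rnot_le_lt; intro Hle.
  destruct (IVT_gen u 0 x 0 Hc) as [z [Hz Ez]].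
  - split; [apply Rle_trans with (u x); [apply Rmin_r|lra]|].
    apply Rle_trans with (u 0); [lra|apply Rmax_l].
  - apply (Hnz z); [rewrite Rmin_left in Hz by lra; lra|exact Ez].
Qed.

Lemma airy_sol_bounded_pos_decr u u' M : airy_solution u u' -> continuity u ->
  (forall x, 0 <= x -> Rabs (u x) <= M) -> 0 < u 0 ->
  forall x, 0 <= x -> 0 < u x /\ u' x < 0.
Proof.
  intros Hs Hc HM H0.
  assert (Hn := airy_sol_bounded_prod_neg u u' M Hs HM ltac:(lra)).
  assert (Hp : forall x, 0 <= x -> 0 < u x).
  { apply continuity_pos_of_nonzero; auto.
    intros x Hx E. specialize (Hn x Hx). rewrite E in Hn. lra. }
  intros x Hx. specialize (Hn x Hx). specialize (Hp x Hx). split; nra.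
Qed.

Lemma airy_sol_pos_incr v v' : airy_solution v v' -> continuity v -> 0 < v 0 -> 0 < v' 0 ->
  forall x, 0 <= x -> 0 < v x /\ 0 < v' x.
Proof.
  intros Hs Hc H0 H1.
  assert (Hp : forall x, 0 <= x -> v 0 * v' 0 <= v x * v' x)
    by (intros x Hx; apply (airy_sol_prod_mono v v' _ _ Hs); lra).
  assert (Hpos : forall x, 0 <= x -> 0 < v x).
  { apply continuity_pos_of_nonzero; auto.
    intros x Hx E. specialize (Hp x Hx). rewrite E in Hp. nra. }
  intros x Hx. specialize (Hp x Hx). specialize (Hpos x Hx). split; nra.
Qed.

(* If [u >= eps] on [[1, T]] then [u'] would become positive. *)
Lemma airy_sol_decay u u' : airy_solution u u' -> (forall x, 0 <= x -> 0 < u x /\ u' x < 0) ->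
  forall eps, 0 < eps -> exists X, forall t, X <= t -> u t < eps.
Proof.
  intros Hs Hsg eps He.
  set (T := 1 + (Rabs (u' 1) + 1) / eps).
  assert (HT : 1 < T) by (unfold T; assert (0 < (Rabs (u' 1) + 1) / eps) by
    (apply Rdiv_lt_0_compat; [assert (0 <= Rabs (u' 1)) by apply Rabs_pos|]; lra); lra).
  assert (Hdecr : forall a b, 0 <= a <= b -> u b <= u a).
  { intros a b Hab. cut (- u a <= - u b); [lra|].
    apply (is_derive_nonneg_le (fun t => - u t) (fun t => - u' t)); [lra| |].
    - intros t Ht. apply is_derive_Ropp, Hs. lra.
    - intros t Ht. destruct (Hsg t ltac:(lra)). lra. }
  exists T. intros t Ht.
  apply Rle_lt_trans with (u T); [apply Hdecr; lra|]. apply Rnot_le_lt; intro HuT.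
  assert (u' 1 + eps * (T - 1) <= u' T).
  { apply (is_derive_lower_slope u' (fun t => t * u t)); [lra| |].
    - intros s Hs'. apply Hs; lra.
    - intros s Hs'. assert (u T <= u s) by (apply Hdecr; lra). nra. }
  assert (eps * (T - 1) = Rabs (u' 1) + 1) by (unfold T; field; lra).
  assert (- u' 1 <= Rabs (u' 1)) by (rewrite <- Rabs_Ropp; apply Rle_abs).
  destruct (Hsg T ltac:(lra)). lra.
Qed.

(* [mu u + u'] is, up to the factor [exp (mu x)], the derivative of [x |-> exp (mu x) u (mu^2 + x)]. *)
Lemma airy_weight_deriv u u' mu t : airy_solution u u' -> 0 <= t ->
  is_derive (fun t => exp (- mu * t) * (mu * u t + u' t)) t (exp (- mu * t) * ((t - mu ^ 2) * u t)).
Proof.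
  intros Hs Ht. destruct (Hs t Ht) as [D1 D2]. eapply is_derive_eq.
  - apply (is_derive_Rmult (fun t => exp (- mu * t)) (fun t => mu * u t + u' t)).
    + apply (is_derive_exp_comp (fun t => - mu * t)), is_derive_lin.
    + apply (is_derive_Rplus (fun t => mu * u t) u'); [apply is_derive_Rscal|]; eassumption.
  - ring_R.
Qed.

(* A nonnegative weight at [t0 >= mu^2] would increase to some [d > 0], keeping
   [mu u + u' >= d] forever, which is impossible as [u] tends to [0] and [u' < 0]. *)
Lemma airy_weight_neg u u' mu : airy_solution u u' -> (forall x, 0 <= x -> 0 < u x /\ u' x < 0) ->
  0 <= mu -> forall t, mu ^ 2 <= t -> mu * u t + u' t < 0.
Proof.
  intros Hs Hsg Hmu t0 Ht0. apply Rnot_le_lt; intro Hh.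
  set (w := fun t => exp (- mu * t) * (mu * u t + u' t)).
  assert (Hmu2 : 0 <= mu ^ 2) by apply pow2_ge_0.
  assert (Hw : forall a b, t0 <= a < b -> w a < w b).
  { intros a b Hab. apply (is_derive_pos_lt w (fun t => exp (- mu * t) * ((t - mu ^ 2) * u t)) a b ltac:(lra)).
    - intros s Hs'. apply (airy_weight_deriv u u' mu s Hs). lra.
    - intros s Hs'. apply Rmult_lt_0_compat; [apply exp_pos|].
      apply Rmult_lt_0_compat; [lra|apply Hsg; lra]. }
  set (d := w (t0 + 1)).
  assert (Hd : 0 < d).
  { assert (0 <= w t0) by (unfold w; apply Rmult_le_pos; [left; apply exp_pos|lra]).
    assert (w t0 < d) by (apply Hw; lra). lra. }
  destruct (airy_sol_decay u u' Hs Hsg (d / (mu + 1))) as [X HuX].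
  { apply Rdiv_lt_0_compat; lra. }
  set (t := Rmax X (t0 + 2)).
  assert (Ht1 : t0 + 2 <= t) by apply Rmax_r. assert (HtX : X <= t) by apply Rmax_l.
  assert (Hwt : d < w t) by (apply Hw; lra).
  assert (Hexp : exp (- mu * t) <= 1).
  { rewrite <- exp_0. destruct (Req_dec mu 0) as [->|].
    - right; f_equal; ring.
    - left; apply exp_increasing. nra. }
  assert (0 < exp (- mu * t)) by apply exp_pos.
  assert (Hut : u t < d / (mu + 1)) by auto.
  assert (mu * (d / (mu + 1)) < d)
    by (apply Rmult_lt_reg_r with (mu + 1); [lra|]; field_simplify; lra).
  destruct (Hsg t ltac:(lra)). unfold w in Hwt.
  set (h := mu * u t + u' t) in Hwt.
  assert (0 < h) by nra.
  assert (d < h) by nra.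
  assert (mu * u t <= mu * (d / (mu + 1))) by (apply Rmult_le_compat_l; lra).
  unfold h in *. lra.
Qed.

Lemma airy_weight_pos y y' mu : airy_solution y y' -> (forall x, 0 <= x -> 0 < y x) -> 0 <= mu ->
  mu * y (mu ^ 2) + y' (mu ^ 2) = 0 -> forall t, mu ^ 2 < t -> 0 < mu * y t + y' t.
Proof.
  intros Hs Hp Hmu E0 t Ht.
  assert (Hmu2 : 0 <= mu ^ 2) by apply pow2_ge_0.
  assert (H : exp (- mu * mu ^ 2) * (mu * y (mu ^ 2) + y' (mu ^ 2))
            < exp (- mu * t) * (mu * y t + y' t)).
  { apply (is_derive_pos_lt (fun t => exp (- mu * t) * (mu * y t + y' t))
      (fun t => exp (- mu * t) * ((t - mu ^ 2) * y t)) _ _ Ht).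
    - intros s Hs'. apply (airy_weight_deriv y y' mu s Hs). lra.
    - intros s Hs'. apply Rmult_lt_0_compat; [apply exp_pos|].
      apply Rmult_lt_0_compat; [lra|apply Hp; lra]. }
  rewrite E0, Rmult_0_r in H. assert (0 < exp (- mu * t)) by apply exp_pos. nra.
Qed.

Lemma airy_sol_exp_shift_incr y y' mu : 0 <= mu -> airy_solution y y' ->
  (forall t, mu ^ 2 < t -> 0 < mu * y t + y' t) ->
  forall x z, 0 <= x -> x < z -> exp (mu * x) * y (mu ^ 2 + x) < exp (mu * z) * y (mu ^ 2 + z).
Proof.
  intros Hmu Hs Hw x z Hx Hxz. assert (Hmu2 : 0 <= mu ^ 2) by apply pow2_ge_0.
  apply (is_derive_pos_lt (fun t => exp (mu * t) * y (mu ^ 2 + t))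
    (fun t => exp (mu * t) * (mu * y (mu ^ 2 + t) + y' (mu ^ 2 + t)))); auto.
  - intros t Ht. destruct (Hs (mu ^ 2 + t) ltac:(lra)) as [D1 _]. eapply is_derive_eq.
    + apply (is_derive_Rmult (fun t => exp (mu * t)) (fun t => y (mu ^ 2 + t))).
      * apply (is_derive_exp_comp (fun t => mu * t)), is_derive_lin.
      * apply is_derive_shift, D1.
    + ring_R.
  - intros t Ht. apply Rmult_lt_0_compat; [apply exp_pos|apply Hw; lra].
Qed.

(** * The Taylor series of [Ai] and [Bi] *)

Definition airy_recurrence (a : nat -> R) : Prop :=
  a 2%nat = 0 /\ forall m, a (S (S (S m))) = a m / (INR (S (S (S m))) * INR (S (S m))).

Lemma airy_recurrence_f : airy_recurrence airy_f_coef.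
Proof. now split. Qed.

Lemma airy_recurrence_g : airy_recurrence airy_g_coef.
Proof. now split. Qed.

Lemma sum_f_R0_ge_term (t : nat -> R) N n : (forall k, 0 <= t k) -> (n <= N)%nat ->
  t n <= sum_f_R0 t N.
Proof.
  intros Hp Hn. induction N as [|N IH].
  - replace n with 0%nat by lia. simpl. lra.
  - simpl. destruct (Nat.eq_dec n (S N)) as [->|Hne].
    + assert (0 <= sum_f_R0 t N) by now apply cond_pos_sum. lra.
    + specialize (IH ltac:(lia)). specialize (Hp (S N)). lra.
Qed.

(* Past [N > r^3] the recurrence only shrinks [|a n r^n|] along each residue class mod 3. *)
Lemma airy_recurrence_bounded a r : airy_recurrence a -> 0 <= r ->
  exists M, forall n, Rabs (a n * r ^ n) <= M.
Proof.
  intros [_ Hrec] Hr.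
  destruct (INR_unbounded (r ^ 3)) as [N HN].
  set (t := fun n => Rabs (a n * r ^ n)).
  exists (sum_f_R0 t (N + 2)).
  intro n. induction n as [n IH] using (well_founded_induction lt_wf).
  destruct (le_lt_dec n (N + 2)) as [Hle|Hlt].
  { apply (sum_f_R0_ge_term t); auto. intros; apply Rabs_pos. }
  destruct n as [|[|[|m]]]; try lia.
  apply Rle_trans with (Rabs (a m * r ^ m)); [|apply IH; lia].
  set (q := INR (S (S (S m))) * INR (S (S m))).
  assert (Hq : r ^ 3 <= q).
  { assert (INR N <= INR m) by (apply le_INR; lia).
    assert (0 <= INR m) by apply pos_INR.
    assert (INR m <= q) by (unfold q; rewrite !S_INR; nra). lra. }
  assert (Hq0 : 0 < q) by (unfold q; apply Rmult_lt_0_compat; apply lt_0_INR; lia).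
  rewrite Hrec. fold q.
  replace (a m / q * r ^ S (S (S m))) with (a m * r ^ m * (r ^ 3 / q)) by (simpl; field; lra).
  rewrite Rabs_mult, (Rabs_pos_eq (_ / _)) by (apply Rdiv_le_0_compat; [apply pow_le|]; lra).
  assert (r ^ 3 / q <= 1) by (apply Rmult_le_reg_r with q; [lra|]; field_simplify; lra).
  assert (0 <= Rabs (a m * r ^ m)) by apply Rabs_pos. nra.
Qed.

Lemma airy_recurrence_CV_radius a x : airy_recurrence a -> Rbar_lt (Rabs x) (CV_radius a).
Proof.
  intros Ha. destruct (CV_radius_bounded a) as [Hub _].
  assert (H := Hub (Rabs x + 1)).
  assert (Hr : 0 <= Rabs x + 1) by (assert (0 <= Rabs x) by apply Rabs_pos; lra).
  specialize (H (airy_recurrence_bounded a _ Ha Hr)).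
  destruct (CV_radius a); simpl in *; auto; lra.
Qed.

Lemma is_derive_PSeries_airy a x : airy_recurrence a ->
  is_derive (PSeries a) x (PSeries (PS_derive a) x).
Proof. intros Ha. now apply is_derive_PSeries, airy_recurrence_CV_radius. Qed.

Lemma is_derive_PSeries_airy' a x : airy_recurrence a ->
  is_derive (PSeries (PS_derive a)) x (x * PSeries a x).
Proof.
  intros Ha. eapply is_derive_eq.
  - apply is_derive_PSeries. rewrite CV_radius_derive. now apply airy_recurrence_CV_radius.
  - rewrite <- PSeries_incr_1. apply PSeries_ext. destruct Ha as [H2 Hrec].
    intros [|n]; unfold PS_derive, PS_incr_1.
    + rewrite H2. change zero with 0. ring.
    + rewrite Hrec, !S_INR. field. assert (0 <= INR n) by apply pos_INR. lra.
Qed.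

Lemma continuity_PSeries_airy a : airy_recurrence a -> continuity (PSeries a).
Proof. intros Ha x. now apply PSeries_continuity, airy_recurrence_CV_radius. Qed.

Definition airy_f' (x : R) : R := PSeries (PS_derive airy_f_coef) x.
Definition airy_g' (x : R) : R := PSeries (PS_derive airy_g_coef) x.

Definition Ai' (x : R) : R := airy_c1 * airy_f' x - airy_c2 * airy_g' x.
Definition Bi' (x : R) : R := sqrt 3 * (airy_c1 * airy_f' x + airy_c2 * airy_g' x).

Lemma is_derive_Ai x : is_derive Ai x (Ai' x).
Proof.
  apply (is_derive_Rminus (fun x => airy_c1 * airy_f x)); apply is_derive_Rscal;
    apply is_derive_PSeries_airy; [apply airy_recurrence_f|apply airy_recurrence_g].
Qed.

Lemma is_derive_Bi x : is_derive Bi x (Bi' x).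
Proof.
  apply is_derive_Rscal, (is_derive_Rplus (fun x => airy_c1 * airy_f x)); apply is_derive_Rscal;
    apply is_derive_PSeries_airy; [apply airy_recurrence_f|apply airy_recurrence_g].
Qed.

Lemma airy_solution_Ai : airy_solution Ai Ai'.
Proof.
  intros x _. split; [apply is_derive_Ai|]. eapply is_derive_eq.
  - apply (is_derive_Rminus (fun x => airy_c1 * airy_f' x)); apply is_derive_Rscal;
      apply is_derive_PSeries_airy'; [apply airy_recurrence_f|apply airy_recurrence_g].
  - unfold Ai, airy_f, airy_g. ring_R.
Qed.

Lemma airy_solution_Bi : airy_solution Bi Bi'.
Proof.
  intros x _. split; [apply is_derive_Bi|]. eapply is_derive_eq.
  - apply is_derive_Rscal, (is_derive_Rplus (fun x => airy_c1 * airy_f' x)); apply is_derive_Rscal;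
      apply is_derive_PSeries_airy'; [apply airy_recurrence_f|apply airy_recurrence_g].
  - unfold Bi, airy_f, airy_g. ring_R.
Qed.

Lemma continuity_Ai : continuity Ai.
Proof.
  intro x. apply continuity_pt_minus; apply continuity_pt_scal;
    apply continuity_PSeries_airy; [apply airy_recurrence_f|apply airy_recurrence_g].
Qed.

Lemma continuity_Bi : continuity Bi.
Proof.
  intro x. apply continuity_pt_scal, continuity_pt_plus; apply continuity_pt_scal;
    apply continuity_PSeries_airy; [apply airy_recurrence_f|apply airy_recurrence_g].
Qed.

Lemma Ai_0 : Ai 0 = airy_c1.
Proof. unfold Ai, airy_f, airy_g. rewrite !PSeries_0. simpl. ring. Qed.

Lemma Ai'_0 : Ai' 0 = - airy_c2.
Proof. unfold Ai', airy_f', airy_g'. rewrite !PSeries_0. unfold PS_derive. simpl. ring. Qed.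

Lemma Bi_0 : Bi 0 = sqrt 3 * airy_c1.
Proof. unfold Bi, airy_f, airy_g. rewrite !PSeries_0. simpl. ring. Qed.

Lemma Bi'_0 : Bi' 0 = sqrt 3 * airy_c2.
Proof. unfold Bi', airy_f', airy_g'. rewrite !PSeries_0. unfold PS_derive. simpl. ring. Qed.

Lemma continuous_of_ex_derive (f : R -> R) x : ex_derive f x -> @continuous R_UniformSpace R_UniformSpace f x.
Proof. exact (@ex_derive_continuous R_AbsRing R_NormedModule f x). Qed.

Lemma ex_RInt_cont (g : R -> R) a b : (forall s, continuous g s) -> ex_RInt g a b.
Proof. intros H. apply (@ex_RInt_continuous R_CompleteNormedModule). intros; apply H. Qed.

Lemma RInt_Chasles_cont (g : R -> R) a b c : (forall s, continuous g s) ->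
  RInt g a c = RInt g a b + RInt g b c.
Proof. intros H. symmetry. apply (RInt_Chasles g a b c); now apply ex_RInt_cont. Qed.

Lemma RInt_scal_exp_neg c a b : RInt (fun s => c * exp (- s)) a b = c * (exp (- a) - exp (- b)).
Proof.
  rewrite (is_RInt_unique _ a b (minus (- c * exp (- b)) (- c * exp (- a)))).
  - unfold minus, plus, opp; simpl. ring.
  - apply (@is_RInt_derive R_CompleteNormedModule (fun s => - c * exp (- s))).
    + intros x _. auto_derive; auto; ring.
    + intros x _. apply continuous_of_ex_derive. auto_derive. auto.
Qed.

Lemma exp_neg_lt c eps R0 : 0 < eps -> 0 <= c -> c / eps <= R0 -> c * exp (- R0) < eps.
Proof.
  intros He Hc HR.
  assert (H1 := exp_ineq1_le R0). assert (Hp := exp_pos R0).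
  rewrite exp_Ropp.
  assert (c <= eps * R0) by (apply Rmult_le_reg_r with (/ eps); [apply Rinv_0_lt_compat; lra|];
    replace (eps * R0 * / eps) with R0 by (field; lra); exact HR).
  apply Rmult_lt_reg_r with (exp R0); auto. rewrite Rmult_assoc, Rinv_l by lra. nra.
Qed.

Lemma le_of_exp_neg_slack Q A B : 0 <= B -> (forall R0, 0 <= R0 -> Q <= A + B * exp (- R0)) -> Q <= A.
Proof.
  intros HB H. apply Rnot_lt_le; intro Hlt.
  assert (H1 := H (B / (Q - A)) ltac:(apply Rdiv_le_0_compat; lra)).
  assert (H2 := exp_neg_lt B (Q - A) (B / (Q - A)) ltac:(lra) HB (Rle_refl _)). lra.
Qed.

Definition exp_dominated (g : R -> R) (c : R) : Prop :=
  (forall s, continuous g s) /\ (forall s, 0 <= s -> Rabs (g s) <= c * exp (- s)).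

Lemma exp_dominated_nonneg g c : exp_dominated g c -> 0 <= c.
Proof.
  intros [_ Hb]. specialize (Hb 0 (Rle_refl 0)). rewrite Ropp_0, exp_0 in Hb.
  assert (0 <= Rabs (g 0)) by apply Rabs_pos. lra.
Qed.

Lemma exp_dominated_RInt_bound g c a b : exp_dominated g c -> 0 <= a <= b ->
  Rabs (RInt g a b) <= c * (exp (- a) - exp (- b)).
Proof.
  intros [Hc Hb] Hab.
  eapply Rle_trans; [apply abs_RInt_le; [lra|now apply ex_RInt_cont]|].
  rewrite <- RInt_scal_exp_neg. apply RInt_le; [lra| | |].
  - apply ex_RInt_cont. intros s. now apply continuous_Rabs_comp.
  - apply ex_RInt_cont. intros s. apply continuous_of_ex_derive. auto_derive. auto.
  - intros x Hx. apply Hb. lra.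
Qed.

(* [int_0^oo g] along integer upper bounds; junk value [0] when that limit does not exist. *)
Definition RInt_inf (g : R -> R) : R := real (Lim_seq (fun n => RInt g 0 (INR n))).

Lemma is_lim_seq_RInt_inf g c : exp_dominated g c ->
  is_lim_seq (fun n => RInt g 0 (INR n)) (RInt_inf g).
Proof.
  intros Hg. assert (Hc0 := exp_dominated_nonneg g c Hg).
  assert (Hcauchy : forall eps : posreal, exists N, forall n m, (N <= n)%nat -> (n <= m)%nat ->
    Rabs (RInt g 0 (INR n) - RInt g 0 (INR m)) < eps).
  { intros eps. destruct (INR_unbounded (c / eps)) as [N HN]. exists N. intros n m Hn Hnm.
    rewrite (RInt_Chasles_cont g 0 (INR n) (INR m)) by apply Hg.
    replace (RInt g 0 (INR n) - (RInt g 0 (INR n) + RInt g (INR n) (INR m)))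
      with (- RInt g (INR n) (INR m)) by lra. rewrite Rabs_Ropp.
    eapply Rle_lt_trans.
    { apply (exp_dominated_RInt_bound g c); auto. split; [apply pos_INR|now apply le_INR]. }
    assert (0 < exp (- INR m)) by apply exp_pos.
    assert (c * exp (- INR n) < eps).
    { apply exp_neg_lt; [apply cond_pos|auto|]. assert (INR N <= INR n) by now apply le_INR. lra. }
    nra. }
  assert (Hex : ex_finite_lim_seq (fun n => RInt g 0 (INR n))).
  { apply ex_lim_seq_cauchy_corr. intros eps. destruct (Hcauchy eps) as [N HN].
    exists N. intros n m Hn Hm. destruct (le_lt_dec n m).
    - now apply HN.
    - rewrite Rabs_minus_sym. apply HN; auto; lia. }
  destruct Hex as [l Hl]. unfold RInt_inf. now rewrite (is_lim_seq_unique _ _ Hl).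
Qed.

Lemma RInt_inf_tail g c R0 : exp_dominated g c -> 0 <= R0 ->
  Rabs (RInt_inf g - RInt g 0 R0) <= c * exp (- R0).
Proof.
  intros Hg HR. assert (Hc0 := exp_dominated_nonneg g c Hg).
  cut (Rbar_le (Rabs (RInt_inf g - RInt g 0 R0)) (c * exp (- R0))); [easy|].
  apply (is_lim_seq_le_loc (fun n => Rabs (RInt g 0 (INR n) - RInt g 0 R0)) (fun _ => c * exp (- R0))).
  - destruct (INR_unbounded R0) as [N HN]. exists N. intros n Hn.
    assert (INR N <= INR n) by now apply le_INR.
    rewrite (RInt_Chasles_cont g 0 R0 (INR n)) by apply Hg.
    replace (RInt g 0 R0 + RInt g R0 (INR n) - RInt g 0 R0) with (RInt g R0 (INR n)) by lra.
    eapply Rle_trans; [apply (exp_dominated_RInt_bound g c); auto; lra|].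
    assert (0 < exp (- INR n)) by apply exp_pos. nra.
  - apply (is_lim_seq_abs _ (RInt_inf g - RInt g 0 R0)).
    apply is_lim_seq_minus'; [apply (is_lim_seq_RInt_inf g c Hg)|apply is_lim_seq_const].
  - apply is_lim_seq_const.
Qed.

Lemma RInt_inf_ge_RInt g c R0 : exp_dominated g c -> 0 <= R0 -> (forall s, 0 <= s -> 0 <= g s) ->
  RInt g 0 R0 <= RInt_inf g.
Proof.
  intros Hg HR Hp.
  cut (Rbar_le (RInt g 0 R0) (RInt_inf g)); [easy|].
  apply (is_lim_seq_le_loc (fun _ => RInt g 0 R0) (fun n => RInt g 0 (INR n)));
    [|apply is_lim_seq_const|apply (is_lim_seq_RInt_inf g c Hg)].
  destruct (INR_unbounded R0) as [N HN]. exists N. intros n Hn.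
  assert (INR N <= INR n) by now apply le_INR.
  rewrite (RInt_Chasles_cont g 0 R0 (INR n)) by apply Hg.
  assert (0 <= RInt g R0 (INR n)); [|lra].
  apply RInt_ge_0; [lra|apply ex_RInt_cont, Hg|]. intros; apply Hp; lra.
Qed.

Lemma RInt_inf_ext f g : (forall s, f s = g s) -> RInt_inf f = RInt_inf g.
Proof. intros H. unfold RInt_inf. f_equal. apply Lim_seq_ext. intros n. now apply RInt_ext. Qed.

Lemma RInt_inf_scal g c k : exp_dominated g c -> RInt_inf (fun s => k * g s) = k * RInt_inf g.
Proof.
  intros Hg. unfold RInt_inf at 1.
  rewrite (Lim_seq_ext _ (fun n => k * RInt g 0 (INR n))).
  - rewrite (is_lim_seq_unique _ (k * RInt_inf g)); [reflexivity|].
    apply (is_lim_seq_scal_l _ k (RInt_inf g)), (is_lim_seq_RInt_inf g c Hg).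
  - intros n. apply (RInt_scal g 0 (INR n) k), ex_RInt_cont, Hg.
Qed.

Lemma RInt_minus_scal_cont (f h : R -> R) k a b : (forall s, continuous f s) -> (forall s, continuous h s) ->
  RInt (fun s => f s - k * h s) a b = RInt f a b - k * RInt h a b.
Proof.
  intros Hf Hh. apply is_RInt_unique.
  apply (@is_RInt_minus R_CompleteNormedModule f (fun s => k * h s));
    [|apply (@is_RInt_scal R_CompleteNormedModule h a b k)]; apply RInt_correct, ex_RInt_cont; auto.
Qed.

Lemma RInt_minus_minus_scal_cont (f g h : R -> R) k a b : (forall s, continuous f s) ->
  (forall s, continuous g s) -> (forall s, continuous h s) ->
  RInt (fun s => f s - g s - k * h s) a b = RInt f a b - RInt g a b - k * RInt h a b.
Proof.
  intros Hf Hg Hh. apply is_RInt_unique.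
  apply (@is_RInt_minus R_CompleteNormedModule (fun s => f s - g s) (fun s => k * h s)).
  - apply (@is_RInt_minus R_CompleteNormedModule f g); apply RInt_correct, ex_RInt_cont; auto.
  - apply (@is_RInt_scal R_CompleteNormedModule h a b k), RInt_correct, ex_RInt_cont; auto.
Qed.

(** * Differentiation under the integral sign *)

Lemma is_derive_MVT_between (f df : R -> R) a b :
  (forall t, Rmin a b <= t <= Rmax a b -> is_derive f t (df t)) ->
  exists c, Rmin a b <= c <= Rmax a b /\ f b - f a = df c * (b - a).
Proof.
  intros H. destruct (Rtotal_order a b) as [Hlt|[->|Hgt]].
  - rewrite Rmin_left, Rmax_right in * by lra.
    destruct (is_derive_MVT f df a b Hlt H) as [c [Hc E]]. exists c. split; [lra|auto].
  - exists b. rewrite Rmin_left, Rmax_left by lra. split; [lra|ring].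
  - rewrite Rmin_right, Rmax_left in * by lra.
    destruct (is_derive_MVT f df b a Hgt H) as [c [Hc E]]. exists c. split; lra.
Qed.

Lemma taylor1_bound (f f1 f2 : R -> R) a b M :
  (forall t, Rmin a b <= t <= Rmax a b -> is_derive f t (f1 t) /\ is_derive f1 t (f2 t)) ->
  (forall t, Rmin a b <= t <= Rmax a b -> Rabs (f2 t) <= M) ->
  Rabs (f b - f a - f1 a * (b - a)) <= M * (b - a) ^ 2.
Proof.
  intros HD HM.
  destruct (is_derive_MVT_between f f1 a b) as [c [Hc E]]; [intros t Ht; now apply HD|].
  assert (Hac : forall t, Rmin a c <= t <= Rmax a c -> Rmin a b <= t <= Rmax a b)
    by (revert Hc; unfold Rmin, Rmax; destruct (Rle_dec a b), (Rle_dec a c); intros; lra).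
  destruct (is_derive_MVT_between f1 f2 a c) as [d [Hd E2]]; [intros t Ht; now apply HD, Hac|].
  rewrite E. replace (f1 c * (b - a) - f1 a * (b - a)) with ((f1 c - f1 a) * (b - a)) by ring.
  rewrite E2, !Rabs_mult, <- (pow2_abs (b - a)).
  assert (Hca : Rabs (c - a) <= Rabs (b - a)).
  { revert Hc; unfold Rmin, Rmax; destruct (Rle_dec a b); intros.
    - rewrite (Rabs_pos_eq (c - a)), (Rabs_pos_eq (b - a)); lra.
    - rewrite (Rabs_left1 (c - a)), (Rabs_left1 (b - a)); lra. }
  assert (HMd := HM d (Hac d Hd)).
  assert (0 <= Rabs (f2 d)) by apply Rabs_pos. assert (0 <= Rabs (c - a)) by apply Rabs_pos.
  assert (0 <= Rabs (b - a)) by apply Rabs_pos.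
  apply Rle_trans with (M * Rabs (c - a) * Rabs (b - a)); [apply Rmult_le_compat_r; nra|].
  simpl. rewrite Rmult_1_r, Rmult_assoc.
  apply Rmult_le_compat_l; [lra|]. now apply Rmult_le_compat_r.
Qed.

Lemma is_derive_of_quadratic_remainder (f : R -> R) x l K d : 0 < d ->
  (forall h, Rabs h < d -> Rabs (f (x + h) - f x - h * l) <= K * h ^ 2) -> is_derive f x l.
Proof.
  intros Hd HQ. apply is_derive_Reals. intros eps Heps.
  assert (HK : 0 <= Rabs K) by apply Rabs_pos.
  assert (Hd' : 0 < Rmin d (eps / (Rabs K + 1))) by (apply Rmin_glb_lt; [|apply Rdiv_lt_0_compat]; lra).
  exists (mkposreal _ Hd'). intros h Hh0 Hh. simpl in Hh.
  assert (Hh1 : Rabs h < d) by (eapply Rlt_le_trans; [exact Hh|apply Rmin_l]).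
  assert (Hh2 : Rabs h < eps / (Rabs K + 1)) by (eapply Rlt_le_trans; [exact Hh|apply Rmin_r]).
  assert (Hh3 : 0 < Rabs h) by now apply Rabs_pos_lt.
  replace ((f (x + h) - f x) / h - l) with ((f (x + h) - f x - h * l) / h) by (field; auto).
  rewrite Rabs_div by auto.
  apply Rmult_lt_reg_r with (Rabs h); auto. unfold Rdiv. rewrite Rmult_assoc, Rinv_l, Rmult_1_r by lra.
  apply Rle_lt_trans with (K * h ^ 2); [now apply HQ|].
  rewrite <- (pow2_abs h).
  assert (Rabs K * Rabs h < eps).
  { apply Rle_lt_trans with ((Rabs K + 1) * Rabs h); [nra|].
    apply Rmult_lt_reg_r with (/ (Rabs K + 1)); [apply Rinv_0_lt_compat; lra|].
    replace ((Rabs K + 1) * Rabs h * / (Rabs K + 1)) with (Rabs h) by (field; lra). lra. }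
  assert (K <= Rabs K) by apply Rle_abs. simpl. nra.
Qed.

Section ParametricIntegral.

Variables (a K : R) (G0 G1 G2 : R -> R -> R).

Hypothesis G_derive : forall x s, a < x ->
  is_derive (fun y => G0 y s) x (G1 x s) /\ is_derive (fun y => G1 y s) x (G2 x s).

Hypothesis G_dominated : forall x, a < x ->
  exp_dominated (G0 x) K /\ exp_dominated (G1 x) K /\ exp_dominated (G2 x) K.

Lemma RInt_param_taylor1 x h R0 : a < x -> a < x + h -> 0 <= R0 ->
  Rabs (RInt (fun s => G0 (x + h) s - G0 x s - h * G1 x s) 0 R0) <= K * h ^ 2.
Proof.
  intros Hx Hxh HR0.
  destruct (G_dominated x Hx) as [[Ga _] [[Gb _] Gc]]. destruct (G_dominated (x + h) Hxh) as [[Ga' _] _].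
  assert (HK := exp_dominated_nonneg _ _ Gc).
  assert (Hmin : a < Rmin x (x + h)) by (apply Rmin_glb_lt; lra).
  assert (Hc : forall s, continuous (fun s => G0 (x + h) s - G0 x s - h * G1 x s) s).
  { intros s. apply (continuous_minus (fun s => G0 (x + h) s - G0 x s) (fun s => h * G1 x s)).
    - apply (continuous_minus (G0 (x + h)) (G0 x)); [apply Ga'|apply Ga].
    - apply (continuous_scal_r h (G1 x)), Gb. }
  eapply Rle_trans; [apply abs_RInt_le; [lra|now apply ex_RInt_cont]|].
  apply Rle_trans with (RInt (fun s => K * h ^ 2 * exp (- s)) 0 R0).
  - apply RInt_le; [lra| | |].
    + apply ex_RInt_cont. intros s. now apply continuous_Rabs_comp.
    + apply ex_RInt_cont. intros s. apply continuous_of_ex_derive. auto_derive. auto.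
    + intros s Hs.
      assert (Ht := taylor1_bound (fun y => G0 y s) (fun y => G1 y s) (fun y => G2 y s) x (x + h)
        (K * exp (- s))).
      replace (x + h - x) with h in Ht by ring.
      replace (G0 (x + h) s - G0 x s - h * G1 x s) with (G0 (x + h) s - G0 x s - G1 x s * h) by ring.
      replace (K * h ^ 2 * exp (- s)) with (K * exp (- s) * h ^ 2) by ring.
      apply Ht; intros t Ht'.
      * apply G_derive. lra.
      * destruct (G_dominated t ltac:(lra)) as [_ [_ [_ Hb]]]. apply Hb. lra.
  - rewrite RInt_scal_exp_neg, Ropp_0, exp_0.
    assert (0 < exp (- R0)) by apply exp_pos. assert (0 <= K * h ^ 2) by nra. nra.
Qed.

Lemma RInt_inf_param_taylor1 x h : a < x -> a < x + h ->
  Rabs (RInt_inf (G0 (x + h)) - RInt_inf (G0 x) - h * RInt_inf (G1 x)) <= K * h ^ 2.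
Proof.
  intros Hx Hxh.
  destruct (G_dominated x Hx) as [Ga [Gb Gc]]. destruct (G_dominated (x + h) Hxh) as [Ga' _].
  assert (HK := exp_dominated_nonneg _ _ Gc).
  apply (le_of_exp_neg_slack _ _ (K * (2 + Rabs h))); [assert (0 <= Rabs h) by apply Rabs_pos; nra|].
  intros R0 HR0.
  assert (HD := RInt_param_taylor1 x h R0 Hx Hxh HR0).
  rewrite RInt_minus_minus_scal_cont in HD by (apply Ga' || apply Ga || apply Gb).
  assert (T1 := RInt_inf_tail _ _ R0 Ga' HR0).
  assert (T2 := RInt_inf_tail _ _ R0 Ga HR0).
  assert (T3 := RInt_inf_tail _ _ R0 Gb HR0).
  set (D := RInt (G0 (x + h)) 0 R0 - RInt (G0 x) 0 R0 - h * RInt (G1 x) 0 R0) in HD.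
  replace (RInt_inf (G0 (x + h)) - RInt_inf (G0 x) - h * RInt_inf (G1 x)) with
    (D + (RInt_inf (G0 (x + h)) - RInt (G0 (x + h)) 0 R0) - (RInt_inf (G0 x) - RInt (G0 x) 0 R0)
     - h * (RInt_inf (G1 x) - RInt (G1 x) 0 R0)) by (unfold D; ring).
  eapply Rle_trans; [apply Rabs_triang|].
  eapply Rle_trans; [apply Rplus_le_compat_r, Rabs_triang|].
  eapply Rle_trans; [apply Rplus_le_compat_r, Rplus_le_compat_r, Rabs_triang|].
  rewrite !Rabs_Ropp, Rabs_mult.
  assert (0 <= Rabs h) by apply Rabs_pos. assert (0 < exp (- R0)) by apply exp_pos.
  assert (Rabs h * Rabs (RInt_inf (G1 x) - RInt (G1 x) 0 R0) <= Rabs h * (K * exp (- R0)))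
    by (apply Rmult_le_compat_l; auto).
  nra.
Qed.

Lemma is_derive_RInt_inf_param x : a < x -> is_derive (fun y => RInt_inf (G0 y)) x (RInt_inf (G1 x)).
Proof.
  intros Hx. apply (is_derive_of_quadratic_remainder _ _ _ K (x - a)); [lra|].
  intros h Hh. apply Rabs_lt_between in Hh. apply RInt_inf_param_taylor1; lra.
Qed.

End ParametricIntegral.

(** * An integral representation of [Ai] *)

(* With [v = exp (-2 i pi/3)], [airy_kernel k x s = Im (exp (i pi/3) (v s)^k exp (-s^3/3 + v x s))]:
   the [k]-th [x]-derivative of the integrand of a contour-integral representation of [Ai]. *)
Definition airy_kernel (k : nat) (x s : R) : R :=
  (-1) ^ k * s ^ k * exp (- s ^ 3 / 3 - x * s / 2) * sin (INR (k + 1) * PI / 3 - sqrt 3 / 2 * x * s).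

Definition airy_int (k : nat) (x : R) : R := RInt_inf (airy_kernel k x).

Lemma is_derive_airy_kernel k x s : is_derive (fun y => airy_kernel k y s) x (airy_kernel (S k) x s).
Proof.
  assert (E : INR (S k + 1) * PI / 3 - sqrt 3 / 2 * x * s
            = (INR (k + 1) * PI / 3 - sqrt 3 / 2 * x * s) + PI / 3)
    by (rewrite !plus_INR, S_INR; simpl INR; field).
  unfold airy_kernel. auto_derive; auto. rewrite E.
  rewrite (sin_plus (INR (k + 1) * PI / 3 - sqrt 3 / 2 * x * s) (PI / 3)), sin_PI3, cos_PI3.
  change (INR (k + 1) * PI / 3 + - (sqrt 3 / 2 * x * s)) with (INR (k + 1) * PI / 3 - sqrt 3 / 2 * x * s).
  change (- (s * (s * (s * 1))) / 3 + - (x * s * / 2)) with (- (s * (s * (s * 1))) / 3 - x * s * / 2).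
  simpl. unfold Rdiv. field_R.
Qed.

Lemma continuous_airy_kernel k x s : continuous (airy_kernel k x) s.
Proof. apply continuous_of_ex_derive. unfold airy_kernel. auto_derive. auto. Qed.

Lemma exp_le_exp_compat a b : a <= b -> exp a <= exp b.
Proof. intros [H|H]; [left; now apply exp_increasing|right; now subst]. Qed.

Lemma pow_le_exp_3mul k s : (k <= 3)%nat -> 0 <= s -> s ^ k <= exp (3 * s).
Proof.
  intros Hk Hs. apply Rle_trans with ((1 + s) ^ 3).
  - destruct k as [|[|[|[|k]]]]; try lia; simpl; nra.
  - replace (exp (3 * s)) with (exp s ^ 3) by (simpl; rewrite Rmult_1_r, <- !exp_plus; f_equal; ring).
    apply pow_incr. assert (H := exp_ineq1_le s). lra.
Qed.

Definition kernel_const : R := exp 9.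

(* With [s^k <= exp (3 s)] it remains to see [s^3 - 27 s / 2 + 27 > 0], whose minimum on
   [s >= 0], at [s = 3 / sqrt 2], is about [7.9]. *)
Lemma airy_kernel_envelope k x s : (k <= 3)%nat -> -1 <= x -> 0 <= s ->
  s ^ k * exp (- s ^ 3 / 3 - x * s / 2) <= kernel_const * exp (- s).
Proof.
  intros Hk Hx Hs. unfold kernel_const.
  apply Rle_trans with (exp (3 * s) * exp (- s ^ 3 / 3 - x * s / 2)).
  { apply Rmult_le_compat_r; [left; apply exp_pos|now apply pow_le_exp_3mul]. }
  rewrite <- !exp_plus. apply exp_le_exp_compat.
  assert (x * s >= - s) by nra.
  assert (s ^ 3 - 13.5 * s + 27 > 0).
  { assert (0 <= (s - 2.12) ^ 2 * (s + 4.24)) by (apply Rmult_le_pos; [apply pow2_ge_0|lra]).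
    simpl in *. nra. }
  simpl in *. lra.
Qed.

Lemma airy_kernel_dominated k x : (k <= 3)%nat -> -1 <= x -> exp_dominated (airy_kernel k x) kernel_const.
Proof.
  intros Hk Hx. split; [apply continuous_airy_kernel|]. intros s Hs. unfold airy_kernel.
  rewrite !Rabs_mult, pow_1_abs, Rmult_1_l, (Rabs_pos_eq (exp _)) by (left; apply exp_pos).
  rewrite <- RPow_abs, (Rabs_pos_eq s) by lra.
  apply Rle_trans with (s ^ k * exp (- s ^ 3 / 3 - x * s / 2) * 1).
  - apply Rmult_le_compat_l; [apply Rmult_le_pos; [apply pow_le; lra|left; apply exp_pos]|].
    apply Rabs_le. split; apply SIN_bound.
  - rewrite Rmult_1_r. now apply airy_kernel_envelope.
Qed.

Lemma is_derive_airy_int k x : (k <= 1)%nat -> -1 < x -> is_derive (airy_int k) x (airy_int (S k) x).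
Proof.
  intros Hk Hx.
  apply (is_derive_RInt_inf_param (-1) kernel_const (airy_kernel k) (airy_kernel (S k))
    (airy_kernel (S (S k)))); auto.
  - intros; split; apply is_derive_airy_kernel.
  - intros y Hy. repeat split; try apply continuous_airy_kernel;
      apply airy_kernel_dominated; lia || lra.
Qed.

Definition airy_kernel_primitive (x s : R) : R := - exp (- s ^ 3 / 3 - x * s / 2) * sin (sqrt 3 / 2 * x * s).

Lemma is_derive_airy_kernel_primitive x s :
  is_derive (airy_kernel_primitive x) s (airy_kernel 2 x s - x * airy_kernel 0 x s).
Proof.
  unfold airy_kernel_primitive, airy_kernel. auto_derive; auto.
  replace (INR (2 + 1) * PI / 3 - sqrt 3 / 2 * x * s) with (PI - sqrt 3 / 2 * x * s) by (simpl; field).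
  replace (INR (0 + 1) * PI / 3 - sqrt 3 / 2 * x * s) with (PI / 3 - sqrt 3 / 2 * x * s) by (simpl; field).
  rewrite sin_PI_x, sin_minus, sin_PI3, cos_PI3. unfold Rminus, Rdiv. simpl. field_R.
Qed.

(* The kernel equation [K_2 = x K_0 + d/ds P] integrates to the Airy equation for [airy_int 0],
   since the primitive [P] vanishes at [0] and at infinity. *)
Lemma airy_int_2 x : -1 <= x -> airy_int 2 x = x * airy_int 0 x.
Proof.
  intros Hx.
  cut (Rabs (airy_int 2 x - x * airy_int 0 x) <= 0).
  { intros H. assert (H0 := Rabs_pos (airy_int 2 x - x * airy_int 0 x)).
    assert (Rabs (airy_int 2 x - x * airy_int 0 x) = 0) by lra. apply Rabs_eq_0 in H1. lra. }
  apply (le_of_exp_neg_slack _ 0 (kernel_const * (2 + Rabs x))).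
  { assert (0 <= Rabs x) by apply Rabs_pos. assert (0 < kernel_const) by apply exp_pos. nra. }
  intros R0 HR0.
  assert (HI : RInt (airy_kernel 2 x) 0 R0 - x * RInt (airy_kernel 0 x) 0 R0
               = airy_kernel_primitive x R0 - airy_kernel_primitive x 0).
  { rewrite <- RInt_minus_scal_cont by (intros; apply continuous_airy_kernel).
    apply is_RInt_unique, (@is_RInt_derive R_CompleteNormedModule (airy_kernel_primitive x)).
    - intros; apply is_derive_airy_kernel_primitive.
    - intros s _. apply continuous_of_ex_derive. unfold airy_kernel. auto_derive. auto. }
  assert (HP0 : airy_kernel_primitive x 0 = 0)
    by (unfold airy_kernel_primitive; replace (sqrt 3 / 2 * x * 0) with 0 by ring; rewrite sin_0; ring).
  assert (HPR : Rabs (airy_kernel_primitive x R0) <= kernel_const * exp (- R0)).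
  { unfold airy_kernel_primitive.
    rewrite Rabs_mult, Rabs_Ropp, (Rabs_pos_eq (exp _)) by (left; apply exp_pos).
    apply Rle_trans with (R0 ^ 0 * exp (- R0 ^ 3 / 3 - x * R0 / 2) * 1).
    - simpl. rewrite Rmult_1_l. apply Rmult_le_compat_l; [left; apply exp_pos|].
      apply Rabs_le. split; apply SIN_bound.
    - rewrite Rmult_1_r. apply airy_kernel_envelope; [lia|lra|lra]. }
  assert (T2 := RInt_inf_tail _ _ R0 (airy_kernel_dominated 2 x ltac:(lia) Hx) HR0).
  assert (T0 := RInt_inf_tail _ _ R0 (airy_kernel_dominated 0 x ltac:(lia) Hx) HR0).
  fold (airy_int 2 x) in T2. fold (airy_int 0 x) in T0.
  replace (airy_int 2 x - x * airy_int 0 x) with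
    ((airy_int 2 x - RInt (airy_kernel 2 x) 0 R0) - x * (airy_int 0 x - RInt (airy_kernel 0 x) 0 R0)
     + airy_kernel_primitive x R0) by (rewrite HP0 in HI; lra).
  eapply Rle_trans; [apply Rabs_triang|].
  eapply Rle_trans; [apply Rplus_le_compat_r, Rabs_triang|].
  rewrite Rabs_Ropp, Rabs_mult.
  assert (0 <= Rabs x) by apply Rabs_pos. assert (0 < exp (- R0)) by apply exp_pos.
  assert (Rabs x * Rabs (airy_int 0 x - RInt (airy_kernel 0 x) 0 R0) <= Rabs x * (kernel_const * exp (- R0)))
    by (apply Rmult_le_compat_l; auto).
  nra.
Qed.

Lemma airy_solution_airy_int : airy_solution (airy_int 0) (airy_int 1).
Proof.
  intros x Hx. split.
  - apply is_derive_airy_int; [lia|lra].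
  - rewrite <- airy_int_2 by lra. apply is_derive_airy_int; [lia|lra].
Qed.

Lemma airy_int_0_bounded x : 0 <= x -> Rabs (airy_int 0 x) <= kernel_const.
Proof.
  intros Hx. assert (H := RInt_inf_tail _ _ 0 (airy_kernel_dominated 0 x ltac:(lia) ltac:(lra)) (Rle_refl 0)).
  rewrite (@RInt_point R_CompleteNormedModule), Ropp_0, exp_0, Rmult_1_r in H.
  unfold zero in H; simpl in H. now rewrite Rminus_0_r in H.
Qed.

Definition exp_cube_integral : R := RInt_inf (fun s => exp (- s ^ 3 / 3)).
Definition s_exp_cube_integral : R := RInt_inf (fun s => s * exp (- s ^ 3 / 3)).

Lemma exp_cube_dominated : exp_dominated (fun s => exp (- s ^ 3 / 3)) kernel_const.
Proof.
  split; [intros s; apply continuous_of_ex_derive; auto_derive; auto|].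
  intros s Hs. rewrite Rabs_pos_eq by (left; apply exp_pos).
  replace (exp (- s ^ 3 / 3)) with (s ^ 0 * exp (- s ^ 3 / 3 - 0 * s / 2))
    by (simpl; rewrite Rmult_1_l; f_equal; field).
  apply airy_kernel_envelope; auto; lra.
Qed.

Lemma s_exp_cube_dominated : exp_dominated (fun s => s * exp (- s ^ 3 / 3)) kernel_const.
Proof.
  split; [intros s; apply continuous_of_ex_derive; auto_derive; auto|].
  intros s Hs. rewrite Rabs_pos_eq by (apply Rmult_le_pos; [lra|left; apply exp_pos]).
  replace (s * exp (- s ^ 3 / 3)) with (s ^ 1 * exp (- s ^ 3 / 3 - 0 * s / 2))
    by (simpl; rewrite Rmult_1_r; do 2 f_equal; field).
  apply airy_kernel_envelope; auto; lra.
Qed.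

Lemma airy_int_0_at_0 : airy_int 0 0 = sin (PI / 3) * exp_cube_integral.
Proof.
  unfold airy_int, exp_cube_integral. rewrite <- (RInt_inf_scal _ _ _ exp_cube_dominated).
  apply RInt_inf_ext. intros s. unfold airy_kernel.
  replace (INR (0 + 1) * PI / 3 - sqrt 3 / 2 * 0 * s) with (PI / 3) by (simpl; field).
  replace (- s ^ 3 / 3 - 0 * s / 2) with (- s ^ 3 / 3) by field. simpl. ring.
Qed.

Lemma airy_int_1_at_0 : airy_int 1 0 = - sin (PI / 3) * s_exp_cube_integral.
Proof.
  unfold airy_int, s_exp_cube_integral. rewrite <- (RInt_inf_scal _ _ _ s_exp_cube_dominated).
  apply RInt_inf_ext. intros s. unfold airy_kernel.
  replace (INR (1 + 1) * PI / 3 - sqrt 3 / 2 * 0 * s) with (PI - PI / 3) by (simpl; field).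
  rewrite sin_PI_x.
  replace (- s ^ 3 / 3 - 0 * s / 2) with (- s ^ 3 / 3) by field. simpl. ring.
Qed.

Lemma exp_cube_integral_pos : 0 < exp_cube_integral.
Proof.
  apply Rlt_le_trans with (RInt (fun s => exp (- s ^ 3 / 3)) 0 1).
  2:{ apply (RInt_inf_ge_RInt _ kernel_const 1 exp_cube_dominated); [lra|]. intros; left; apply exp_pos. }
  apply Rlt_le_trans with (RInt (fun _ => exp (- 1 / 3)) 0 1).
  - rewrite RInt_const. unfold scal; simpl. unfold mult; simpl.
    rewrite Rminus_0_r, Rmult_1_l. apply exp_pos.
  - apply RInt_le; [lra|apply ex_RInt_const|apply ex_RInt_cont, exp_cube_dominated|].
    intros s Hs. apply exp_le_exp_compat. assert (s ^ 3 <= 1) by (simpl; nra). lra.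
Qed.

Lemma s_exp_cube_integral_pos : 0 < s_exp_cube_integral.
Proof.
  apply Rlt_le_trans with (RInt (fun s => s * exp (- s ^ 3 / 3)) 0 1).
  2:{ apply (RInt_inf_ge_RInt _ kernel_const 1 s_exp_cube_dominated); [lra|].
      intros; apply Rmult_le_pos; [lra|left; apply exp_pos]. }
  apply Rlt_le_trans with (RInt (fun s => exp (- 1 / 3) * s) 0 1).
  - rewrite (is_RInt_unique _ 0 1 (minus (exp (- 1 / 3) * (1 ^ 2 / 2)) (exp (- 1 / 3) * (0 ^ 2 / 2)))).
    + unfold minus, plus, opp; simpl. assert (0 < exp (- 1 / 3)) by apply exp_pos. lra.
    + apply (@is_RInt_derive R_CompleteNormedModule (fun s => exp (- 1 / 3) * (s ^ 2 / 2))).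
      * intros x _. auto_derive; auto. simpl. field.
      * intros x _. apply continuous_of_ex_derive. auto_derive. auto.
  - apply RInt_le; [lra| | |].
    + apply ex_RInt_cont. intros s. apply continuous_of_ex_derive. auto_derive. auto.
    + apply ex_RInt_cont, s_exp_cube_dominated.
    + intros s Hs. rewrite Rmult_comm. apply Rmult_le_compat_l; [lra|].
      apply exp_le_exp_compat. assert (s ^ 3 <= 1) by (simpl; nra). lra.
Qed.

(** * The Gamma values *)

Definition cube_subst_inv (t : R) : R := Rpower (3 * t) (1 / 3).

Lemma cube_subst_inv_pos t : 0 < cube_subst_inv t.
Proof. apply exp_pos. Qed.

Lemma cube_subst_inv_cube t : 0 < t -> cube_subst_inv t ^ 3 / 3 = t.
Proof.
  intros Ht. unfold cube_subst_inv. rewrite <- Rpower_pow by apply exp_pos.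
  rewrite Rpower_mult. replace (1 / 3 * INR 3) with 1 by (simpl; field).
  rewrite Rpower_1 by lra. field.
Qed.

Lemma cube_subst_inv_lt t a : 0 < t -> 0 < a -> t < a ^ 3 / 3 -> cube_subst_inv t < a.
Proof.
  intros Ht Ha H. rewrite <- (cube_subst_inv_cube t Ht) in H.
  apply Rnot_le_lt; intro Hle. assert (a ^ 3 <= cube_subst_inv t ^ 3) by (apply pow_incr; lra). lra.
Qed.

Lemma cube_subst_inv_gt t b : 0 < t -> 0 < b -> b ^ 3 / 3 < t -> b < cube_subst_inv t.
Proof.
  intros Ht Hb H. rewrite <- (cube_subst_inv_cube t Ht) in H.
  apply Rnot_le_lt; intro Hle.
  assert (cube_subst_inv t ^ 3 <= b ^ 3) by (apply pow_incr; split; [left; apply cube_subst_inv_pos|lra]).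
  lra.
Qed.

Section CubeSubstitution.

Variables (f h : R -> R) (c K : R).

Hypothesis f_cont : forall t, 0 < t -> continuous f t.
Hypothesis h_dominated : exp_dominated h K.
Hypothesis f_cube : forall s, 0 < s -> f (s ^ 3 / 3) * s ^ 2 = c * h s.

Lemma is_RInt_cube_subst a b : 0 < a -> 0 < b ->
  is_RInt f a b (c * RInt h (cube_subst_inv a) (cube_subst_inv b)).
Proof.
  intros Ha Hb. set (sa := cube_subst_inv a). set (sb := cube_subst_inv b).
  assert (Hmin : 0 < Rmin sa sb) by (apply Rmin_glb_lt; apply cube_subst_inv_pos).
  assert (Hsub : is_RInt (fun y => scal (y ^ 2) (f (y ^ 3 / 3))) sa sb (RInt f a b)).
  { assert (Hc := @is_RInt_comp R_CompleteNormedModule f (fun y => y ^ 3 / 3) (fun y => y ^ 2) sa sb).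
    cbv beta in Hc. unfold sa, sb in Hc. rewrite !cube_subst_inv_cube in Hc by auto. fold sa sb in Hc.
    apply Hc.
    - intros y Hy. apply f_cont. assert (0 < y ^ 3) by (apply pow_lt; lra). lra.
    - intros y Hy. split; [auto_derive; auto; field|].
      apply continuous_of_ex_derive. auto_derive. auto. }
  replace (c * RInt h sa sb) with (RInt f a b).
  - apply (@RInt_correct R_CompleteNormedModule), (@ex_RInt_continuous R_CompleteNormedModule).
    intros z Hz. apply f_cont. assert (0 < Rmin a b) by (apply Rmin_glb_lt; auto). lra.
  - rewrite <- (is_RInt_unique _ _ _ _ Hsub).
    transitivity (RInt (fun y => c * h y) sa sb).
    + apply RInt_ext. intros y Hy. change (y ^ 2 * f (y ^ 3 / 3) = c * h y).
      rewrite <- f_cube by lra. ring.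
    + apply (RInt_scal h sa sb c), ex_RInt_cont, h_dominated.
Qed.

Lemma RInt_window_RInt_inf al be : 0 <= al -> 0 <= be ->
  Rabs (RInt h al be - RInt_inf h) <= K * al + K * exp (- be).
Proof.
  intros Hal Hbe. assert (HK := exp_dominated_nonneg _ _ h_dominated).
  assert (T1 := RInt_inf_tail h K be h_dominated ltac:(lra)).
  assert (T2 := exp_dominated_RInt_bound h K 0 al h_dominated ltac:(lra)).
  rewrite Ropp_0, exp_0 in T2.
  assert (1 - al <= exp (- al)) by (assert (H := exp_ineq1_le (- al)); lra).
  rewrite (RInt_Chasles_cont h 0 al be) in T1 by apply h_dominated.
  replace (RInt h al be - RInt_inf h) with (- (RInt_inf h - (RInt h 0 al + RInt h al be)) - RInt h 0 al)
    by ring.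
  eapply Rle_trans; [apply Rabs_triang|]. rewrite !Rabs_Ropp. nra.
Qed.

Lemma is_RInt_gen_cube_subst :
  is_RInt_gen f (at_right 0) (Rbar_locally p_infty) (c * RInt_inf h).
Proof.
  assert (HK := exp_dominated_nonneg _ _ h_dominated).
  intros P [eps HP].
  assert (Heps := cond_pos eps). assert (Hc := Rabs_pos c).
  set (e := eps / (Rabs c + 1)). assert (He : 0 < e) by (apply Rdiv_lt_0_compat; lra).
  set (al := e / (2 * (K + 1))). assert (Hal : 0 < al) by (apply Rdiv_lt_0_compat; lra).
  set (be := 2 * K / e + 1). assert (Hbe : 1 <= be) by (assert (0 <= 2 * K / e) by
    (apply Rdiv_le_0_compat; lra); unfold be; lra).
  apply (Filter_prod _ _ _ (fun a => 0 < a < al ^ 3 / 3) (fun b => be ^ 3 / 3 < b)).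
  - assert (Hal3 : 0 < al ^ 3 / 3) by (assert (0 < al ^ 3) by (apply pow_lt; lra); lra).
    exists (mkposreal _ Hal3). intros y Hy Hy0. simpl in Hy.
    unfold ball in Hy; simpl in Hy. unfold AbsRing_ball, abs, minus, plus, opp in Hy; simpl in Hy.
    rewrite Ropp_0, Rplus_0_r in Hy. apply Rabs_lt_between in Hy. lra.
  - now exists (be ^ 3 / 3).
  - intros a b [Ha Ha'] Hb. simpl.
    assert (Hb' : 0 < b) by (assert (0 < be ^ 3) by (apply pow_lt; lra); lra).
    exists (c * RInt h (cube_subst_inv a) (cube_subst_inv b)).
    split; [now apply is_RInt_cube_subst|]. apply HP.
    assert (Hsa := cube_subst_inv_lt a al Ha Hal Ha').
    assert (Hsb := cube_subst_inv_gt b be Hb' ltac:(lra) Hb).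
    assert (Hsa0 := cube_subst_inv_pos a).
    assert (Hw := RInt_window_RInt_inf (cube_subst_inv a) (cube_subst_inv b) ltac:(lra) ltac:(lra)).
    assert (H1 : K * cube_subst_inv a < e / 2).
    { apply Rle_lt_trans with (K * al); [apply Rmult_le_compat_l; lra|].
      unfold al. replace (K * (e / (2 * (K + 1)))) with (e / 2 * (K / (K + 1))) by (field; lra).
      assert (K / (K + 1) < 1) by (apply Rmult_lt_reg_r with (K + 1); [lra|]; field_simplify; lra).
      nra. }
    assert (H2 : K * exp (- cube_subst_inv b) < e / 2).
    { apply exp_neg_lt; [lra|auto|]. unfold be in Hsb.
      replace (K / (e / 2)) with (2 * K / e) by (field; lra). lra. }
    change (Rabs (c * RInt h (cube_subst_inv a) (cube_subst_inv b) - c * RInt_inf h) < eps).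
    rewrite <- Rmult_minus_distr_l, Rabs_mult.
    apply Rle_lt_trans with (Rabs c * e); [apply Rmult_le_compat_l; lra|].
    unfold e. replace (Rabs c * (eps / (Rabs c + 1))) with (eps * (Rabs c / (Rabs c + 1))) by (field; lra).
    assert (Rabs c / (Rabs c + 1) < 1) by (apply Rmult_lt_reg_r with (Rabs c + 1); [lra|]; field_simplify; lra).
    nra.
Qed.

End CubeSubstitution.

Lemma continuous_Gamma_integrand r t : 0 < t -> continuous (fun t => Rpower t (r - 1) * exp (- t)) t.
Proof. intros Ht. apply continuous_of_ex_derive. unfold Rpower. auto_derive. auto. Qed.

Lemma ln_cube_div3 s : 0 < s -> ln (s ^ 3 / 3) = 3 * ln s - ln 3.
Proof. intros Hs. rewrite ln_div, ln_pow by (try apply pow_lt; lra). simpl. ring. Qed.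

Lemma Gamma_1_3 : Gamma (1 / 3) = Rpower 3 (2 / 3) * exp_cube_integral.
Proof.
  unfold Gamma. apply is_RInt_gen_unique.
  apply (is_RInt_gen_cube_subst (fun t => Rpower t (1 / 3 - 1) * exp (- t)) (fun s => exp (- s ^ 3 / 3))
    (Rpower 3 (2 / 3)) kernel_const); [apply continuous_Gamma_integrand|apply exp_cube_dominated|].
  intros s Hs. unfold Rpower. rewrite ln_cube_div3 by auto.
  replace ((1 / 3 - 1) * (3 * ln s - ln 3)) with (2 / 3 * ln 3 + - ln s + - ln s) by field.
  rewrite !exp_plus, exp_Ropp, exp_ln by auto.
  replace (- (s ^ 3 / 3)) with (- s ^ 3 / 3) by field. field. lra.
Qed.

Lemma Gamma_2_3 : Gamma (2 / 3) = Rpower 3 (1 / 3) * s_exp_cube_integral.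
Proof.
  unfold Gamma. apply is_RInt_gen_unique.
  apply (is_RInt_gen_cube_subst (fun t => Rpower t (2 / 3 - 1) * exp (- t)) (fun s => s * exp (- s ^ 3 / 3))
    (Rpower 3 (1 / 3)) kernel_const); [apply continuous_Gamma_integrand|apply s_exp_cube_dominated|].
  intros s Hs. unfold Rpower. rewrite ln_cube_div3 by auto.
  replace ((2 / 3 - 1) * (3 * ln s - ln 3)) with (1 / 3 * ln 3 + - ln s) by field.
  rewrite !exp_plus, exp_Ropp, exp_ln by auto.
  replace (- (s ^ 3 / 3)) with (- s ^ 3 / 3) by field. field. lra.
Qed.

Lemma Rpower_3_thirds : Rpower 3 (2 / 3) * Rpower 3 (1 / 3) = 3.
Proof. rewrite <- Rpower_plus. replace (2 / 3 + 1 / 3) with 1 by field. apply Rpower_1. lra. Qed.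

Lemma airy_c1_eq : airy_c1 = / (3 * s_exp_cube_integral).
Proof. unfold airy_c1. now rewrite Gamma_2_3, <- Rmult_assoc, Rpower_3_thirds. Qed.

Lemma airy_c2_eq : airy_c2 = / (3 * exp_cube_integral).
Proof.
  unfold airy_c2. now rewrite Gamma_1_3, <- Rmult_assoc, (Rmult_comm (Rpower 3 (1 / 3))), Rpower_3_thirds.
Qed.

Lemma airy_c1_pos : 0 < airy_c1.
Proof. rewrite airy_c1_eq. apply Rinv_0_lt_compat. assert (H := s_exp_cube_integral_pos). lra. Qed.

Lemma airy_c2_pos : 0 < airy_c2.
Proof. rewrite airy_c2_eq. apply Rinv_0_lt_compat. assert (H := exp_cube_integral_pos). lra. Qed.

(* The Gamma values in [airy_c1], [airy_c2] are exactly those making the initial data of [Ai]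
   proportional to those of [airy_int 0]. *)
Lemma Ai_eq_airy_int x : 0 <= x ->
  Ai x = airy_c1 / (sin (PI / 3) * exp_cube_integral) * airy_int 0 x.
Proof.
  intros Hx.
  assert (Hs3 : 0 < sin (PI / 3)) by (rewrite sin_PI3; assert (0 < sqrt 3) by (apply sqrt_lt_R0; lra); lra).
  assert (HA0 := exp_cube_integral_pos). assert (HA1 := s_exp_cube_integral_pos).
  set (k := airy_c1 / (sin (PI / 3) * exp_cube_integral)).
  cut (1 * Ai x + - k * airy_int 0 x = 0); [lra|].
  apply (airy_sol_unique (fun t => 1 * Ai t + - k * airy_int 0 t) (fun t => 1 * Ai' t + - k * airy_int 1 t) 0
    (airy_solution_lincomb _ _ _ _ _ _ airy_solution_Ai airy_solution_airy_int)); [lra| | |auto].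
  - rewrite Ai_0, airy_int_0_at_0. unfold k. field. lra.
  - rewrite Ai'_0, airy_int_1_at_0. unfold k. rewrite airy_c1_eq, airy_c2_eq. field. lra.
Qed.

Lemma Ai_bounded : exists M, forall x, 0 <= x -> Rabs (Ai x) <= M.
Proof.
  exists (Rabs (airy_c1 / (sin (PI / 3) * exp_cube_integral)) * kernel_const). intros x Hx.
  rewrite Ai_eq_airy_int, Rabs_mult by auto.
  apply Rmult_le_compat_l; [apply Rabs_pos|now apply airy_int_0_bounded].
Qed.

Lemma Ai_pos_decr x : 0 <= x -> 0 < Ai x /\ Ai' x < 0.
Proof.
  destruct Ai_bounded as [M HM].
  apply (airy_sol_bounded_pos_decr Ai Ai' M airy_solution_Ai continuity_Ai HM).
  rewrite Ai_0. apply airy_c1_pos.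
Qed.

Lemma Bi_pos_incr x : 0 <= x -> 0 < Bi x /\ 0 < Bi' x.
Proof.
  assert (H3 : 0 < sqrt 3) by (apply sqrt_lt_R0; lra).
  apply (airy_sol_pos_incr Bi Bi' airy_solution_Bi continuity_Bi).
  - rewrite Bi_0. apply Rmult_lt_0_compat; [auto|apply airy_c1_pos].
  - rewrite Bi'_0. apply Rmult_lt_0_compat; [auto|apply airy_c2_pos].
Qed.

Theorem lemma2p8 (mu : R) (hmu : 0 <= mu) :
  let C := - ((mu * Bi (mu ^ 2) + Derive Bi (mu ^ 2)) /
              (mu * Ai (mu ^ 2) + Derive Ai (mu ^ 2))) in
  let phi := fun x => PI * exp (mu * x) * Ai (mu ^ 2 + x) in
  let psi := fun x => C * exp (mu * x) * Ai (mu ^ 2 + x) + exp (mu * x) * Bi (mu ^ 2 + x) in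
  (forall x y, 0 <= x -> x < y -> phi y < phi x) /\
  (forall x y, 0 <= x -> x < y -> psi x < psi y).
Proof.
  rewrite (is_derive_unique _ _ _ (is_derive_Bi (mu ^ 2))), (is_derive_unique _ _ _ (is_derive_Ai (mu ^ 2))).
  intros C phi psi.
  assert (Hmu2 : 0 <= mu ^ 2) by apply pow2_ge_0.
  assert (HAw := airy_weight_neg Ai Ai' mu airy_solution_Ai Ai_pos_decr hmu).
  split.
  - intros x y Hx Hxy.
    assert (Hw : forall t, mu ^ 2 < t -> 0 < mu * - Ai t + - Ai' t)
      by (intros t Ht; specialize (HAw t ltac:(lra)); lra).
    assert (H := airy_sol_exp_shift_incr _ _ mu hmu (airy_solution_opp _ _ airy_solution_Ai) Hw x y Hx Hxy).
    assert (HPI := PI_RGT_0). unfold phi. nra.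
  - assert (HAw0 : mu * Ai (mu ^ 2) + Ai' (mu ^ 2) < 0) by (apply HAw; lra).
    assert (HC : 0 < C).
    { assert (0 < mu * Bi (mu ^ 2) + Bi' (mu ^ 2)) by (destruct (Bi_pos_incr (mu ^ 2) Hmu2); nra).
      unfold C. rewrite <- Rdiv_opp_r. apply Rdiv_lt_0_compat; lra. }
    assert (Hy := airy_solution_lincomb C 1 _ _ _ _ airy_solution_Ai airy_solution_Bi).
    assert (Hpos : forall t, 0 <= t -> 0 < C * Ai t + 1 * Bi t)
      by (intros t Ht; destruct (Ai_pos_decr t Ht), (Bi_pos_incr t Ht); nra).
    assert (Hw0 : mu * (C * Ai (mu ^ 2) + 1 * Bi (mu ^ 2)) + (C * Ai' (mu ^ 2) + 1 * Bi' (mu ^ 2)) = 0)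
      by (unfold C; field; lra).
    assert (Hw := airy_weight_pos _ _ mu Hy Hpos hmu Hw0).
    intros x y Hx Hxy. assert (H := airy_sol_exp_shift_incr _ _ mu hmu Hy Hw x y Hx Hxy).
    unfold psi. lra.
Qed.
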